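(* Let $A$ be a strongly AUF algebra, let $M\in\mathrm{Coh}_{\mathrm L}(A)$ be a projective generator of $\mathrm{Coh}_{\mathrm L}(A)$, and let $B=\mathrm{End}_{A,-}(M)^{\mathrm{op}}$, so that $M$ is an $A$-$B$ bimodule. Then $M$ has a left coordinate system and a right coordinate system. Moreover, the map $$\mathrm{SLF}(A)\to\mathrm{SLF}(B),\qquad \psi\mapsto {}^{\psi}\mathrm{Tr}$$ is a linear isomorphism, whose inverse is $$\mathrm{SLF}(B)\to\mathrm{SLF}(A),\qquad \phi\mapsto \mathrm{Tr}^{\phi},$$ where both pseudotraces are taken with respect to the $A$-$B$ bimodule $M$.
   Context: All algebras are associative $\mathbb C$-algebras, not necessarily unital. An idempotent is an element $e$ with $e^2=e$. An algebra $A$ is AUF if there is a family $(e_i)_{i\in\mathfrak I}$ of mutually orthogonal idempotents ($e_ie_j=0$ for $i\neq j$) with $\dim e_iAe_j<\infty$ for all $i,j$ and $A=\sum_{i,j\in\mathfrak I}e_iAe_j$ (every element is a finite sum of elements of the spaces $e_iAe_j$). A left $A$-module $M$ is quasicoherent if $\xi\in A\xi$ for all $\xi\in M$; it is coherent if it is quasicoherent and finitely generated; $\mathrm{Coh}_{\mathrm L}(A)$ is the category of coherent left $A$-modules. A left module is irreducible if it is nonzero and has no nonzero proper submodules. An idempotent $e\in A$ is generating if every irreducible quasicoherent left $A$-module is a quotient of $Ae$. An AUF algebra is strongly AUF if it has a generating idempotent. A projective generator of $\mathrm{Coh}_{\mathrm L}(A)$ is an $M\in \mathrm{Coh}_{\mathrm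 L}(A)$ that is projective as a left $A$-module and such that every $N\in\mathrm{Coh}_{\mathrm L}(A)$ is a quotient of $M^{\oplus n}$ for some $n\ge1$. $\mathrm{Hom}_{A,-}$ denotes left $A$-module maps, $\mathrm{Hom}_{-,B}$ right $B$-module maps; $B=\mathrm{End}_{A,-}(M)^{\mathrm{op}}$ acts on $M$ on the right by $\xi\cdot T=T(\xi)$; for $y\in B$ write $y^{\mathrm{op}}$ for the corresponding map $\xi\mapsto \xi y$ in $\mathrm{End}_{A,-}(M)$. For an algebra $C$, $\mathrm{SLF}(C)$ is the space of linear maps $\phi:C\to\mathbb C$ with $\phi(xy)=\phi(yx)$ for all $x,y$. Left coordinate system (for algebras $A$, $B$ with $B$ unital, and an $A$-$B$ bimodule $M$): a family $\alpha_i\in\mathrm{Hom}_{-,B}(B,M)$, $\check\alpha^i\in\mathrm{Hom}_{-,B}(M,B)$, $i\in I$, such that (a) for each $\xi\in M$, $\check\alpha^i(\xi)=0$ for all but finitely many $i$ and $\sum_i\alpha_i\check\alpha^i(\xi)=\xi$; (b) for each $x\in A$ (acting on $M$), $x\circ\alpha_i=0$ and $\check\alpha^i\circ x=0$ for all but finitely many $i$. The left pseudotrace of $\phi\in\mathrm{SLF}(B)$ is $\mathrm{Tr}^\phi(x)=\sum_i\phi\big(\check\alpha^i(x\,\alpha_i(1_B))\big)$ for $x\in A$; it is a well-defined element of $\mathrm{SLF}(A)$ independent of the left coordinate system. Right coordinate system (for $A$ AUF, $B$ unital, $M$ an $A$-$B$ bimodule that is coherent as a left $A$-module): an idempotent $e\in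 A$ and a finite family $\beta_j\in\mathrm{Hom}_{A,-}(Ae,M)$, $\check\beta^j\in\mathrm{Hom}_{A,-}(M,Ae)$ with $\sum_j\beta_j\circ\check\beta^j=\mathrm{id}_M$. The right pseudotrace of $\psi\in\mathrm{SLF}(A)$ is ${}^\psi\mathrm{Tr}(y)=\sum_j\psi\big(\check\beta^j(\beta_j(e)\,y)\big)$ for $y\in B$ (note $\check\beta^j(\beta_j(e)y)\in eAe$); it is a well-defined element of $\mathrm{SLF}(B)$ independent of the right coordinate system. *)

(* The base field is C := R[i] (= complex R) for R : realType,
   i.e. the complex numbers.  All notions are defined generically over a field K. *)
From HB Require Import structures.
From mathcomp Require Import all_boot all_order all_algebra.
From mathcomp Require Import reals complex.
From Stdlib Require Import ClassicalEpsilon.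
Set Implicit Arguments. Unset Strict Implicit. Unset Printing Implicit Defensive.
Import Order.TTheory GRing.Theory Num.Theory.
Local Open Scope ring_scope.

Section Defs.
Variable K : fieldType.

Record nuAlg := NuAlg {
  nua_sort :> lmodType K;
  nua_mul : nua_sort -> nua_sort -> nua_sort;
  nua_mulA : forall x y z, nua_mul x (nua_mul y z) = nua_mul (nua_mul x y) z;
  nua_mulDl : forall x y z, nua_mul (x + y) z = nua_mul x z + nua_mul y z;
  nua_mulDr : forall x y z, nua_mul x (y + z) = nua_mul x y + nua_mul x z;
  nua_mulZl : forall (c : K) x y, nua_mul (c *: x) y = c *: nua_mul x y;
  nua_mulZr : forall (c : K) x y, nua_mul x (c *: y) = c *: nua_mul x y }.

Record lmod (A : nuAlg) := LMod {
  lm_sort :> lmodType K;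
  lm_act : A -> lm_sort -> lm_sort;
  lm_actA : forall x y m, lm_act (nua_mul x y) m = lm_act x (lm_act y m);
  lm_actDl : forall x y m, lm_act (x + y) m = lm_act x m + lm_act y m;
  lm_actDr : forall x m n, lm_act x (m + n) = lm_act x m + lm_act x n;
  lm_actZl : forall (c : K) x m, lm_act (c *: x) m = c *: lm_act x m;
  lm_actZr : forall (c : K) x m, lm_act x (c *: m) = c *: lm_act x m }.

Definition is_linear (U V : lmodType K) (f : U -> V) : Prop :=
  forall (c : K) u v, f (c *: u + v) = c *: f u + f v.
Definition is_linform (U : lmodType K) (f : U -> K) : Prop :=
  forall (c : K) u v, f (c *: u + v) = c * f u + f v.

Definition cofinitely (I : eqType) (P : I -> Prop) : Prop :=
  exists s : seq I, forall i, i \notin s -> P i.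

(* Sum of a finitely supported family (meaningful when the support is finite:
   then it is the sum over any duplicate-free list containing the support). *)
Definition fsum (I : eqType) (V : nmodType) (F : I -> V) : V :=
  \sum_(i <- epsilon (inhabits [::])
                 (fun s : seq I => uniq s /\ forall i, i \notin s -> F i = 0)) F i.

Section Alg.
Variable A : nuAlg.

Definition idempotent (e : A) : Prop := nua_mul e e = e.

Definition is_hom (M N : lmod A) (f : M -> N) : Prop :=
  is_linear f /\ forall x m, f (lm_act x m) = lm_act x (f m).

Definition quasicoherent (M : lmod A) : Prop :=
  forall m : M, exists x : A, lm_act x m = m.

Definition fin_gen (M : lmod A) : Prop :=
  exists (n : nat) (g : 'I_n -> M), forall m : M,
    exists (c : 'I_n -> K) (x : 'I_n -> A),
      m = \sum_(i < n) (c i *: g i + lm_act (x i) (g i)).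

Definition coherent (M : lmod A) : Prop := quasicoherent M /\ fin_gen M.

Definition submodule (M : lmod A) (P : M -> Prop) : Prop :=
  [/\ P 0, (forall m n, P m -> P n -> P (m + n)),
      (forall (c : K) m, P m -> P (c *: m)) &
      (forall x m, P m -> P (lm_act x m))].

Definition irreducible (M : lmod A) : Prop :=
  (exists m : M, m <> 0) /\
  forall P : M -> Prop, submodule P -> (exists m, P m /\ m <> 0) -> forall m, P m.

Definition inAe (e a : A) : Prop := exists x : A, a = nua_mul x e.

(* Left A-module maps Ae -> N (given by their values on Ae). *)
Definition hom_from_Ae (e : A) (N : lmod A) (f : A -> N) : Prop :=
  (forall (c : K) a b, inAe e a -> inAe e b -> f (c *: a + b) = c *: f a + f b) /\
  (forall x a, inAe e a -> f (nua_mul x a) = lm_act x (f a)).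

Definition hom_to_Ae (e : A) (N : lmod A) (g : N -> A) : Prop :=
  [/\ (forall m, inAe e (g m)), is_linear g &
      (forall x m, g (lm_act x m) = nua_mul x (g m))].

Definition quotient_of_Ae (e : A) (N : lmod A) : Prop :=
  exists f : A -> N, hom_from_Ae e f /\ forall n : N, exists a, inAe e a /\ f a = n.

Definition generating (e : A) : Prop :=
  idempotent e /\
  forall N : lmod A, quasicoherent N -> irreducible N -> quotient_of_Ae e N.

Definition AUF : Prop :=
  exists (J : Type) (ee : J -> A),
  [/\ (forall i, idempotent (ee i)),
      (forall i j, i <> j -> nua_mul (ee i) (ee j) = 0),
      (forall i j, exists (n : nat) (v : 'I_n -> A), forall x : A,
          exists c : 'I_n -> K,
            nua_mul (nua_mul (ee i) x) (ee j) = \sum_(k < n) c k *: v k) &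
      (forall a : A, exists s : seq (J * J * A),
          a = \sum_(t <- s) nua_mul (nua_mul (ee t.1.1) t.2) (ee t.1.2))].

Definition strongly_AUF : Prop := AUF /\ exists e : A, generating e.

Definition projective (M : lmod A) : Prop :=
  forall (X Y : lmod A) (g : X -> Y) (f : M -> Y),
    is_hom g -> (forall y, exists x, g x = y) -> is_hom f ->
    exists h : M -> X, is_hom h /\ forall m, g (h m) = f m.

(* N is a quotient of M^{(+)n} for some n >= 1; a map M^{(+)n} -> N is given by
   its n components M -> N. *)
Definition quotient_of_power (M N : lmod A) : Prop :=
  exists n : nat, (0 < n)%N /\
  exists f : 'I_n -> M -> N, (forall i, is_hom (f i)) /\
    forall y : N, exists xi : 'I_n -> M, \sum_(i < n) f i (xi i) = y.

Definition proj_generator (M : lmod A) : Prop :=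
  [/\ coherent M, projective M & forall N : lmod A, coherent N -> quotient_of_power M N].

Definition SLF_A (psi : A -> K) : Prop :=
  is_linform psi /\ forall x y, psi (nua_mul x y) = psi (nua_mul y x).

Section Endo.
Variable M : lmod A.

Definition is_endo (f : M -> M) : Prop := @is_hom M M f.

Lemma hom_add (f g : M -> M) : is_endo f -> is_endo g -> is_endo (fun m => f m + g m).
Proof.
move=> [lf af] [lg ag]; split.
  by move=> c u v; rewrite lf lg scalerDr addrACA.
by move=> x m; rewrite af ag lm_actDr.
Qed.

Lemma hom_scale (c : K) (f : M -> M) : is_endo f -> is_endo (fun m => c *: f m).
Proof.
move=> [lf af]; split.
  by move=> d u v; rewrite lf scalerDr !scalerA mulrC.
by move=> x m; rewrite af lm_actZr.
Qed.

Lemma hom_comp (f g : M -> M) : is_endo f -> is_endo g -> is_endo (fun m => g (f m)).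
Proof.
move=> [lf af] [lg ag]; split; first by move=> c u v; rewrite lf lg.
by move=> x m; rewrite af ag.
Qed.

Lemma hom_id : is_endo (fun m : M => m).
Proof. by split. Qed.

Lemma hom_zero : is_endo (fun _ : M => 0).
Proof.
split; first by move=> c u v; rewrite scaler0 addr0.
by move=> x m; rewrite -(scale0r (0 : M)) lm_actZr !scale0r.
Qed.

Definition Bend := {f : M -> M | is_endo f}.
Definition addB (y z : Bend) : Bend := exist _ _ (hom_add (svalP y) (svalP z)).
Definition scaleB (c : K) (y : Bend) : Bend := exist _ _ (hom_scale c (svalP y)).
Definition zeroB : Bend := exist _ _ hom_zero.
Definition oneB : Bend := exist _ _ hom_id.
(* product in the opposite algebra: (y z) acts on xi as z (y xi), so that
   xi . (y z) = (xi . y) . z for the right action xi . T = T xi. *)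
Definition mulB (y z : Bend) : Bend := exist _ _ (hom_comp (svalP y) (svalP z)).
Definition ractB (m : M) (y : Bend) : M := sval y m.

Definition SLF_B (phi : Bend -> K) : Prop :=
  (forall (c : K) y z, phi (addB (scaleB c y) z) = c * phi y + phi z) /\
  forall y z, phi (mulB y z) = phi (mulB z y).

Definition rhom_BM (al : Bend -> M) : Prop :=
  (forall (c : K) y z, al (addB (scaleB c y) z) = c *: al y + al z) /\
  (forall y z, al (mulB y z) = ractB (al y) z).
Definition rhom_MB (alc : M -> Bend) : Prop :=
  (forall (c : K) m n, alc (c *: m + n) = addB (scaleB c (alc m)) (alc n)) /\
  (forall m z, alc (ractB m z) = mulB (alc m) z).

Definition left_coord (I : eqType) (al : I -> Bend -> M) (alc : I -> M -> Bend)
  : Prop :=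
  [/\ (forall i, rhom_BM (al i)), (forall i, rhom_MB (alc i)),
      (forall m : M, cofinitely (fun i => alc i m = zeroB) /\
                     fsum (fun i => al i (alc i m)) = m) &
      (forall x : A, cofinitely (fun i =>
          (forall y, lm_act x (al i y) = 0) /\
          (forall m, alc i (lm_act x m) = zeroB)))].

Definition LTr (I : eqType) (al : I -> Bend -> M) (alc : I -> M -> Bend)
  (phi : Bend -> K) : A -> K :=
  fun x => fsum (fun i => phi (alc i (lm_act x (al i oneB)))).

Definition right_coord (n : nat) (e : A) (be : 'I_n -> A -> M)
  (bec : 'I_n -> M -> A) : Prop :=
  [/\ idempotent e, (forall j, hom_from_Ae e (be j)),
      (forall j, hom_to_Ae e (bec j)) &
      (forall m : M, \sum_(j < n) be j (bec j m) = m)].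

Definition RTr (n : nat) (e : A) (be : 'I_n -> A -> M) (bec : 'I_n -> M -> A)
  (psi : A -> K) : Bend -> K :=
  fun y => \sum_(j < n) psi (bec j (ractB (be j e) y)).

End Endo.
End Alg.
End Defs.

From HB Require Import structures.
From mathcomp Require Import all_boot all_order all_algebra.
From mathcomp Require Import reals complex.
From mathcomp Require Import boolp.
From Stdlib Require Import ClassicalEpsilon.
Set Implicit Arguments. Unset Strict Implicit. Unset Printing Implicit Defensive.
Import Order.TTheory GRing.Theory Num.Theory.
Local Open Scope ring_scope.

(* For an A-linear [u : M -> A] and [eta : M], let [dyad u eta] be the
   endomorphism [m |-> u m ▷ eta].  By the trace properties of psi and phi,
   expanding in a right, resp. left, coordinate system gives
     ^psi Tr (dyad u eta) = psi (u eta)   and   Tr^phi (u w) = phi (dyad u w).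
   Both inversion formulas follow: every y in B is the sum of the dyads
   [dyad bec_j (y (be_j e))], and every x in A is a sum of terms [U_l (x ▷ Z_l)]
   with A-linear [U_l : M -> A], obtained by writing a local unit f of x as
   f = sum_l U_l (Z_l), which is possible because M generates the coherent
   module A f.
   The orthogonal idempotents of an AUF algebra provide the local units.  The
   projectivity of M splits a surjection A^n -> M, giving a right coordinate
   system, and the decompositions e_j = sum_l U_l (Z_l) give a left one indexed
   by the pairs (j, l): al_(j,l) T = T (e_j ▷ Z_l) and alc_(j,l) m = dyad U_l m. *)

Local Notation "a ⋅ b" := (nua_mul a b) (at level 40, left associativity).
Local Notation "x ▷ m" := (lm_act x m) (at level 40).

Section LinearMaps.
Variable K : fieldType.

Lemma is_linear0 (U V : lmodType K) (f : U -> V) : is_linear f -> f 0 = 0.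
Proof.
move=> lin_f; have := lin_f 1 0 0; rewrite !scale1r addr0 => f0.
by apply: (addrI (f 0)); rewrite addr0 -f0.
Qed.

Lemma is_linearD (U V : lmodType K) (f : U -> V) :
  is_linear f -> {morph f : u v / u + v}.
Proof. by move=> lin_f u v; have := lin_f 1 u v; rewrite !scale1r. Qed.

Lemma is_linear_sum (U V : lmodType K) (f : U -> V) (I : Type) (r : seq I)
    (P : pred I) (F : I -> U) :
  is_linear f -> f (\sum_(i <- r | P i) F i) = \sum_(i <- r | P i) f (F i).
Proof. by move=> lin_f; apply: (big_morph f (is_linearD lin_f) (is_linear0 lin_f)). Qed.

Lemma is_linform_linear (U : lmodType K) (f : U -> K) :
  is_linform f -> @is_linear K U K^o f.
Proof. by []. Qed.

End LinearMaps.

Lemma fsumE (I : eqType) (V : nmodType) (F : I -> V) (s : seq I) :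
  (forall i, i \notin s -> F i = 0) -> fsum F = \sum_(i <- undup s) F i.
Proof.
move=> Fs; rewrite /fsum; set P := fun s0 : seq I => _.
have [|uniq_t Ft] := @epsilon_spec _ (inhabits [::]) P.
  by exists (undup s); split=> [|i]; rewrite ?undup_uniq ?mem_undup //; apply: Fs.
set t := epsilon _ P in uniq_t Ft *.
rewrite (bigID (mem (undup s))) /= [X in _ + X]big1_seq ?addr0; last first.
  by move=> i /andP[]; rewrite mem_undup => /Fs.
rewrite [RHS](bigID (mem t)) /= [X in _ + X]big1_seq ?addr0; last by move=> i /andP[/Ft].
rewrite -[LHS]big_filter -[RHS]big_filter; apply/perm_big/uniq_perm.
- exact: filter_uniq.
- by rewrite filter_uniq ?undup_uniq.
by move=> i; rewrite !mem_filter andbC.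
Qed.

Lemma cofinitelyI (I : eqType) (P Q : I -> Prop) :
  cofinitely P -> cofinitely Q -> cofinitely (fun i => P i /\ Q i).
Proof.
move=> [s Ps] [t Qt]; exists (s ++ t) => i.
by rewrite mem_cat negb_or => /andP[/Ps ? /Qt ?].
Qed.

Section NuAlgebra.
Variables (K : fieldType) (A : nuAlg K).

Lemma nua_mul_linearl (y : A) : is_linear (fun x : A => x ⋅ y).
Proof. by move=> c u v; rewrite nua_mulDl nua_mulZl. Qed.

Lemma nua_mul_linearr (x : A) : is_linear (nua_mul x).
Proof. by move=> c u v; rewrite nua_mulDr nua_mulZr. Qed.

Lemma nua_mul0l (y : A) : 0 ⋅ y = 0. Proof. exact: is_linear0 (nua_mul_linearl y). Qed.
Lemma nua_mul0r (x : A) : x ⋅ 0 = 0. Proof. exact: is_linear0 (nua_mul_linearr x). Qed.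

Variable M : lmod A.

Lemma lm_act_linearl (m : M) : is_linear (fun x : A => x ▷ m).
Proof. by move=> c u v; rewrite lm_actDl lm_actZl. Qed.

Lemma lm_act_linearr (x : A) : is_linear (@lm_act _ _ M x).
Proof. by move=> c u v; rewrite lm_actDr lm_actZr. Qed.

Lemma lm_act0l (m : M) : 0 ▷ m = 0. Proof. exact: is_linear0 (lm_act_linearl m). Qed.

End NuAlgebra.

Section EndomorphismAlgebra.
Variables (K : fieldType) (A : nuAlg K) (M : lmod A).

Lemma Bend_ext (y z : Bend M) : sval y =1 sval z -> y = z.
Proof.
case: y z => [f hf] [g hg] /= /funext fg; subst g.
by congr exist; apply: Prop_irrelevance.
Qed.

Lemma Bend_linear (y : Bend M) : is_linear (sval y).
Proof. by case: (svalP y). Qed.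

Lemma Bend_act (y : Bend M) x m : sval y (x ▷ m) = x ▷ sval y m.
Proof. by case: (svalP y) => _ ->. Qed.

Lemma sumB_apply (I : Type) (r : seq I) (F : I -> Bend M) m :
  sval (\big[@addB _ _ M/zeroB M]_(i <- r) F i) m = \sum_(i <- r) sval (F i) m.
Proof. exact: (big_morph (fun y : Bend M => sval y m)). Qed.

Section LinearFormB.
Variables (phi : Bend M -> K) (phi_slf : SLF_B phi).

Lemma SLF_B0 : phi (zeroB M) = 0.
Proof.
have := phi_slf.1 1 (zeroB M) (zeroB M).
rewrite (_ : addB _ _ = zeroB M) ?mul1r => [phi0|]; last first.
  by apply: Bend_ext => m /=; rewrite scale1r addr0.
by apply: (addrI (phi (zeroB M))); rewrite addr0 -phi0.
Qed.

Lemma SLF_BD y z : phi (addB y z) = phi y + phi z.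
Proof.
have := phi_slf.1 1 y z; rewrite mul1r; congr (phi _ = _).
by apply: Bend_ext => m /=; rewrite scale1r.
Qed.

Lemma SLF_B_sum (I : Type) (r : seq I) (F : I -> Bend M) :
  phi (\big[@addB _ _ M/zeroB M]_(i <- r) F i) = \sum_(i <- r) phi (F i).
Proof. exact: (big_morph phi SLF_BD SLF_B0). Qed.

End LinearFormB.

Definition is_Ahom (u : M -> A) : Prop :=
  is_linear u /\ forall x m, u (x ▷ m) = x ⋅ u m.

Lemma dyad_endo (u : M -> A) (eta : M) : is_Ahom u -> is_endo (fun m => u m ▷ eta).
Proof.
case=> lin_u act_u; split=> [c m m'|x m]; first by rewrite lin_u lm_act_linearl.
by rewrite act_u lm_actA.
Qed.

Definition dyad (u : M -> A) (hu : is_Ahom u) (eta : M) : Bend M :=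
  exist _ _ (dyad_endo eta hu).

End EndomorphismAlgebra.

Section RightPseudotrace.
Variables (K : fieldType) (A : nuAlg K) (M : lmod A).
Variables (n : nat) (e : A) (be : 'I_n -> A -> M) (bec : 'I_n -> M -> A).

Lemma RTr_linear (c : K) (psi1 psi2 : A -> K) y :
  RTr e be bec (fun x => c * psi1 x + psi2 x) y
  = c * RTr e be bec psi1 y + RTr e be bec psi2 y.
Proof. by rewrite /RTr mulr_sumr -big_split. Qed.

Hypothesis right_be : right_coord e be bec.

Lemma right_coord_Ahom j : is_Ahom (bec j).
Proof. by case: right_be => _ _ /(_ j) []. Qed.

Lemma right_coord_expand m : m = \sum_(j < n) bec j m ▷ be j e.
Proof.
case: right_be => e_idem be_hom bec_hom be_bec; rewrite -{1}(be_bec m).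
apply: eq_bigr => j _; have [/(_ m) [x ->] _ _] := bec_hom j.
have [_ be_act] := be_hom j; have e_Ae : inAe e e by exists e; rewrite e_idem.
by rewrite (be_act x e e_Ae) lm_actA -(be_act e e e_Ae) e_idem.
Qed.

Lemma Bend_expand (T : Bend M) m :
  sval T m = \sum_(j < n) bec j m ▷ sval T (be j e).
Proof.
rewrite {1}(right_coord_expand m) (is_linear_sum _ _ _ (Bend_linear T)).
by apply: eq_bigr => j _; rewrite Bend_act.
Qed.

Variables (psi : A -> K) (psi_slf : SLF_A psi).

Lemma RTr_dyad (u : M -> A) (hu : is_Ahom u) eta :
  RTr e be bec psi (dyad hu eta) = psi (u eta).
Proof.
have [[lin_psi psiC] [lin_u act_u]] := (psi_slf, hu).
rewrite /RTr /ractB /=.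
under eq_bigr => j _ do rewrite (right_coord_Ahom j).2 psiC -act_u.
rewrite -(is_linear_sum _ _ _ (is_linform_linear lin_psi)).
by rewrite -(is_linear_sum _ _ _ lin_u) -right_coord_expand.
Qed.

Lemma RTr_SLF : SLF_B (RTr e be bec psi).
Proof.
have [lin_psi psiC] := psi_slf; split=> [c y z|y z].
  rewrite /RTr /ractB /= mulr_sumr -big_split /=; apply: eq_bigr => j _.
  by rewrite (right_coord_Ahom j).1 lin_psi.
have expand (y' z' : Bend M) j : psi (bec j (sval z' (sval y' (be j e)))) =
    \sum_(k < n) psi (bec k (sval y' (be j e)) ⋅ bec j (sval z' (be k e))).
  rewrite (Bend_expand z') (is_linear_sum _ _ _ (right_coord_Ahom j).1).
  rewrite (is_linear_sum _ _ _ (is_linform_linear lin_psi)).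
  by apply: eq_bigr => k _; rewrite (right_coord_Ahom j).2.
rewrite /RTr /ractB /=.
under eq_bigr => j _ do rewrite expand.
under [RHS]eq_bigr => j _ do rewrite expand.
rewrite [RHS]exchange_big; apply: eq_bigr => j _; apply: eq_bigr => k _.
exact: psiC.
Qed.

End RightPseudotrace.

Section LeftPseudotrace.
Variables (K : fieldType) (A : nuAlg K) (M : lmod A).
Variables (I : eqType) (al : I -> Bend M -> M) (alc : I -> M -> Bend M).
Hypothesis left_al : left_coord al alc.

Local Notation xi i := (al i (oneB M)).
Local Notation supports s x :=
  (forall i, i \notin s -> forall m, alc i (x ▷ m) = zeroB M).

Lemma left_coord_eval i y : al i y = sval y (xi i).
Proof.
case: left_al => /(_ i) [_ al_mul] _ _ _.
by rewrite [in LHS](_ : y = mulB (oneB M) y) ?al_mul //; apply: Bend_ext.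
Qed.

Lemma left_coord_mulB i m (z : Bend M) : alc i (sval z m) = mulB (alc i m) z.
Proof. by case: left_al => _ /(_ i) [_ ->]. Qed.

Lemma left_coord_linear i c m m' :
  alc i (c *: m + m') = addB (scaleB c (alc i m)) (alc i m').
Proof. by case: left_al => _ /(_ i) [-> _]. Qed.

Lemma left_coord_support m : cofinitely (fun i => alc i m = zeroB M).
Proof. by case: left_al => _ _ /(_ m) []. Qed.

Lemma left_coord_act_support x :
  cofinitely (fun i => forall m, alc i (x ▷ m) = zeroB M).
Proof. by case: left_al => _ _ _ /(_ x) [s xs]; exists s => i /xs []. Qed.

Lemma left_coord_expand m s : (forall i, i \notin s -> alc i m = zeroB M) ->
  \sum_(i <- undup s) sval (alc i m) (xi i) = m.
Proof.
move=> ms; case: left_al => _ _ /(_ m) [_ expand_m] _.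
rewrite -[RHS]expand_m (@fsumE _ _ _ s) => [|i /ms ->]; last by rewrite left_coord_eval.
by apply: eq_bigr => i _; rewrite [RHS]left_coord_eval.
Qed.

Variables (phi : Bend M -> K) (phi_slf : SLF_B phi).

Lemma SLF_B_alc_sum i (J : Type) (r : seq J) (F : J -> M) :
  phi (alc i (\sum_(j <- r) F j)) = \sum_(j <- r) phi (alc i (F j)).
Proof.
apply: (is_linear_sum (f := fun m => phi (alc i m : Bend M) : K^o)) => c m m' /=.
by rewrite left_coord_linear phi_slf.1.
Qed.

Lemma LTrE x s : supports s x ->
  LTr al alc phi x = \sum_(i <- undup s) phi (alc i (x ▷ xi i)).
Proof. by move=> xs; rewrite /LTr (@fsumE _ _ _ s) // => i /xs ->; apply: SLF_B0. Qed.

Lemma LTr_mulE x y s : supports s x -> supports s y ->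
  LTr al alc phi (x ⋅ y) = \sum_(i <- undup s) \sum_(k <- undup s)
                             phi (mulB (alc i (x ▷ xi k)) (alc k (y ▷ xi i))).
Proof.
move=> xs ys; have xys : supports s (x ⋅ y) by move=> i ? m; rewrite lm_actA xs.
rewrite (LTrE xys); apply: eq_bigr => i _.
rewrite lm_actA -{1}(left_coord_expand (fun k ks => ys k ks (xi i))).
rewrite (is_linear_sum _ _ _ (lm_act_linearr x)) SLF_B_alc_sum.
by apply: eq_bigr => k _; rewrite -Bend_act left_coord_mulB.
Qed.

Lemma LTr_SLF : SLF_A (LTr al alc phi).
Proof.
split=> [c x x'|x y].
  have [s sx] := cofinitelyI (cofinitelyI (left_coord_act_support x)
    (left_coord_act_support x')) (left_coord_act_support (c *: x + x')).
  rewrite (LTrE (fun i si => (sx i si).2)) (LTrE (fun i si => (sx i si).1.1)).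
  rewrite (LTrE (fun i si => (sx i si).1.2)) mulr_sumr -big_split /=.
  by apply: eq_bigr => i _; rewrite lm_act_linearl left_coord_linear phi_slf.1.
have [s sxy] := cofinitelyI (left_coord_act_support x) (left_coord_act_support y).
have [xs ys] : supports s x /\ supports s y.
  by split=> i si; have [] := sxy i si.
rewrite (LTr_mulE xs ys) (LTr_mulE ys xs) exchange_big /=.
by apply: eq_bigr => i _; apply: eq_bigr => k _; apply: phi_slf.2.
Qed.

Lemma LTr_Ahom (u : M -> A) (hu : is_Ahom u) w :
  LTr al alc phi (u w) = phi (dyad hu w).
Proof.
have [s sw] := cofinitelyI (left_coord_act_support (u w)) (left_coord_support w).
rewrite (LTrE (fun i si => (sw i si).1)).
have -> : dyad hu w =
    \big[@addB _ _ M/zeroB M]_(i <- undup s) mulB (dyad hu (xi i)) (alc i w).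
  apply: Bend_ext => m; rewrite sumB_apply /=.
  rewrite -{1}(left_coord_expand (fun i si => (sw i si).2)).
  rewrite (is_linear_sum _ _ _ (lm_act_linearr _)).
  by apply: eq_bigr => i _; rewrite Bend_act.
rewrite SLF_B_sum //; apply: eq_bigr => i _.
by rewrite phi_slf.2 -left_coord_mulB.
Qed.

End LeftPseudotrace.

Section PseudotraceDuality.
Variables (K : fieldType) (A : nuAlg K) (M : lmod A).
Variables (I : eqType) (al : I -> Bend M -> M) (alc : I -> M -> Bend M).
Variables (n : nat) (e : A) (be : 'I_n -> A -> M) (bec : 'I_n -> M -> A).
Hypotheses (left_al : left_coord al alc) (right_be : right_coord e be bec).

Lemma RTr_LTr phi y : SLF_B phi -> RTr e be bec (LTr al alc phi) y = phi y.
Proof.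
move=> phi_slf; have y_dyads : y = \big[@addB _ _ M/zeroB M]_(j < n)
    dyad (right_coord_Ahom right_be j) (sval y (be j e)).
  by apply: Bend_ext => m; rewrite sumB_apply (Bend_expand right_be).
rewrite [in RHS]y_dyads SLF_B_sum //; apply: eq_bigr => j _.
exact: LTr_Ahom.
Qed.

Lemma LTr_RTr psi x k (U : 'I_k -> M -> A) (Z : 'I_k -> M) :
  SLF_A psi -> (forall l, is_Ahom (U l)) -> x ⋅ \sum_(l < k) U l (Z l) = x ->
  LTr al alc (RTr e be bec psi) x = psi x.
Proof.
move=> psi_slf U_hom x_unit; have RTr_slf := RTr_SLF right_be psi_slf.
have x_expand : x = \sum_(l < k) U l (x ▷ Z l).
  rewrite -{1}x_unit (is_linear_sum _ _ _ (nua_mul_linearr x)).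
  by apply: eq_bigr => l _; rewrite (U_hom l).2.
have [lin_LTr _] := LTr_SLF left_al RTr_slf.
rewrite x_expand (is_linear_sum _ _ _ (is_linform_linear lin_LTr)).
rewrite (is_linear_sum _ _ _ (is_linform_linear psi_slf.1)).
by apply: eq_bigr => l _; rewrite (LTr_Ahom left_al RTr_slf) (RTr_dyad right_be).
Qed.

End PseudotraceDuality.

Definition has_local_units (K : fieldType) (A : nuAlg K) : Prop :=
  forall s : seq A, exists p : A,
    p ⋅ p = p /\ forall a, a \in s -> p ⋅ a = a /\ a ⋅ p = a.

Section LocalUnits.
Variables (K : fieldType) (A : nuAlg K) (J : Type) (ee : J -> A).
Hypotheses (ee_idem : forall j, ee j ⋅ ee j = ee j)
           (ee_orth : forall i j, i <> j -> ee i ⋅ ee j = 0)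
           (ee_span : forall a : A, exists s : seq (J * J * A),
              a = \sum_(t <- s) ee t.1.1 ⋅ t.2 ⋅ ee t.1.2).

Let span_of (a : A) : seq ({classic J} * {classic J} * A) :=
  projT1 (cid (ee_span a)).
Let span_ofE (a : A) : a = \sum_(t <- span_of a) ee t.1.1 ⋅ t.2 ⋅ ee t.1.2.
Proof. exact: projT2 (cid (ee_span a)). Qed.

Definition ee_supp (a : A) : seq {classic J} :=
  [seq t.1.1 | t <- span_of a] ++ [seq t.1.2 | t <- span_of a].

Lemma ee_mul_supp j a : j \notin ee_supp a -> ee j ⋅ a = 0 /\ a ⋅ ee j = 0.
Proof.
rewrite mem_cat negb_or => /andP[jl jr]; rewrite (span_ofE a).
rewrite (is_linear_sum _ _ _ (nua_mul_linearr _)).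
rewrite (is_linear_sum _ _ _ (nua_mul_linearl _)); split.
  rewrite big1_seq // => t /andP[_ ts]; rewrite !nua_mulA ee_orth ?nua_mul0l // => jt.
  by rewrite jt (map_f (fun u => u.1.1)) in jl.
rewrite big1_seq // => t /andP[_ ts]; rewrite -nua_mulA ee_orth ?nua_mul0r // => jt.
by rewrite -jt (map_f (fun u => u.1.2)) in jr.
Qed.

Definition ee_sum (L : seq {classic J}) : A := \sum_(j <- L) ee j.

Lemma ee_sum_mul_ee L j : uniq L -> j \in L ->
  ee_sum L ⋅ ee j = ee j /\ ee j ⋅ ee_sum L = ee j.
Proof.
move=> uL jL; rewrite (is_linear_sum _ _ _ (nua_mul_linearl _)).
rewrite (is_linear_sum _ _ _ (nua_mul_linearr _)) !(bigD1_seq j) //= ee_idem.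
by rewrite !big1 ?addr0 // => i /eqP ij; apply: ee_orth => // ji; apply: ij.
Qed.

Lemma ee_sum_unit L a : uniq L -> {subset ee_supp a <= L} ->
  ee_sum L ⋅ a = a /\ a ⋅ ee_sum L = a.
Proof.
move=> uL aL; have inL t : t \in span_of a -> t.1.1 \in L /\ t.1.2 \in L.
  move=> ta; split; apply: aL; rewrite mem_cat.
    by rewrite (map_f (fun u => u.1.1)).
  by rewrite (map_f (fun u => u.1.2)) ?orbT.
rewrite (span_ofE a).
rewrite (is_linear_sum _ _ _ (nua_mul_linearr _)).
rewrite (is_linear_sum _ _ _ (nua_mul_linearl _)); split.
  by apply: eq_big_seq => t /inL [tl _]; rewrite !nua_mulA (ee_sum_mul_ee uL tl).1.
by apply: eq_big_seq => t /inL [_ tr]; rewrite -nua_mulA (ee_sum_mul_ee uL tr).2.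
Qed.

Lemma ee_sum_idem L : uniq L -> ee_sum L ⋅ ee_sum L = ee_sum L.
Proof.
move=> uL; rewrite [in X in _ ⋅ X]/ee_sum (is_linear_sum _ _ _ (nua_mul_linearr _)).
by apply: eq_big_seq => j jL; rewrite (ee_sum_mul_ee uL jL).1.
Qed.

Lemma ee_local_units : has_local_units A.
Proof.
move=> s; pose L := undup (flatten [seq ee_supp a | a <- s]).
have uL : uniq L := undup_uniq _.
exists (ee_sum L); split=> [|a sa]; first exact: ee_sum_idem.
apply: ee_sum_unit => // j ja; rewrite mem_undup.
by apply/flatten_mapP; exists a.
Qed.

End LocalUnits.

Section LeftIdeal.
Variables (K : fieldType) (A : nuAlg K) (f : A).

(* For idempotent [f], the left ideal [A f] is [{a | a ⋅ f = a}]. *)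
Definition in_Af : pred A := fun a => a ⋅ f == a.

Lemma in_Af_submod_closed : subsemimod_closed in_Af.
Proof.
split; [split|] => [|u v|c u]; rewrite !unfold_in /in_Af /=.
- by rewrite nua_mul0l.
- by move=> /eqP uf /eqP vf; rewrite nua_mulDl uf vf.
- by move=> /eqP uf; rewrite nua_mulZl uf.
Qed.

HB.instance Definition _ := GRing.isSubmodClosed.Build K A in_Af in_Af_submod_closed.
Definition Af := {a : A | in_Af a}.
HB.instance Definition _ := [isSub of Af for (@sval A in_Af)].
HB.instance Definition _ := [Choice of Af by <:].
HB.instance Definition _ := [SubChoice_isSubLmodule of Af by <:].

Lemma Af_val_linear : is_linear (val : Af -> A).
Proof. by move=> c a b; rewrite raddfD /=; congr (_ + _); exact: SubK. Qed.

Lemma in_Af_mull x (a : Af) : in_Af (x ⋅ val a).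
Proof. by rewrite /in_Af -nua_mulA (eqP (valP a)). Qed.

Definition Af_act (x : A) (a : Af) : Af := Sub (x ⋅ val a) (in_Af_mull x a).

Lemma Af_actE x a : val (Af_act x a) = x ⋅ val a.
Proof. exact: SubK. Qed.

Lemma Af_actA x y a : Af_act (x ⋅ y) a = Af_act x (Af_act y a).
Proof. by apply: val_inj; rewrite !Af_actE nua_mulA. Qed.

Lemma Af_actDl x y a : Af_act (x + y) a = Af_act x a + Af_act y a.
Proof. by apply: val_inj; rewrite raddfD !Af_actE nua_mulDl. Qed.

Lemma Af_actDr x a b : Af_act x (a + b) = Af_act x a + Af_act x b.
Proof. by apply: val_inj; rewrite !raddfD !Af_actE nua_mulDr. Qed.

Lemma Af_actZl c x a : Af_act (c *: x) a = c *: Af_act x a.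
Proof. by apply: val_inj; rewrite linearZ /= nua_mulZl. Qed.

Lemma Af_actZr c x a : Af_act x (c *: a) = c *: Af_act x a.
Proof. by apply: val_inj; rewrite !Af_actE !linearZ /= nua_mulZr. Qed.

Definition Af_lmod : lmod A := LMod Af_actA Af_actDl Af_actDr Af_actZl Af_actZr.

End LeftIdeal.

Section GeneratorDecomposition.
Variables (K : fieldType) (A : nuAlg K) (M : lmod A).

Record Mdecomp := MDecomp {
  md_size : nat; md_U : 'I_md_size -> M -> A; md_Z : 'I_md_size -> M }.
Arguments md_U : clear implicits.
Arguments md_Z : clear implicits.

Definition decomposes (f : A) (d : Mdecomp) : Prop :=
  [/\ forall l, is_Ahom (md_U d l), forall l m, md_U d l m ⋅ f = md_U d l m
    & \sum_(l < md_size d) md_U d l (md_Z d l) = f].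

Hypotheses (A_units : has_local_units A) (M_gen : proj_generator M).
Variables (f : A) (f_idem : f ⋅ f = f).

Let f_in_Af : in_Af f f. Proof. by rewrite /in_Af f_idem. Qed.

Lemma Af_coherent : coherent (Af_lmod f).
Proof.
split=> [a|].
  have [p [_ /(_ (val a) (mem_head _ _)) [pa _]]] := A_units [:: val a].
  by exists p; apply: val_inj; rewrite /= pa.
exists 1%N, (fun _ => Sub f f_in_Af) => a; exists (fun _ => 0), (fun _ => val a).
rewrite big_ord1 scale0r add0r; apply: val_inj.
by rewrite /= (eqP (valP a)).
Qed.

Lemma generator_decomp : exists d : Mdecomp, decomposes f d.
Proof.
case: M_gen => _ _ /(_ _ Af_coherent) [k [_ [F [F_hom F_onto]]]].
have [Z FZ] := F_onto (Sub f f_in_Af).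
exists (MDecomp (fun l m => val (F l m)) Z); split=> [l|l m|].
- have [lin_F act_F] := F_hom l; split=> [c m m'|x m].
    by rewrite /= lin_F Af_val_linear.
  by rewrite /= act_F.
- exact/eqP/(valP (F l m)).
- by rewrite -raddf_sum FZ.
Qed.

End GeneratorDecomposition.
Arguments md_U {K A M} m.
Arguments md_Z {K A M} m.

Section PowerModule.
Variables (K : fieldType) (A : nuAlg K) (n : nat).

Definition Apow_act (x : A) (v : {ffun 'I_n -> A}) : {ffun 'I_n -> A} :=
  [ffun k => x ⋅ v k].

Lemma Apow_actA x y v : Apow_act (x ⋅ y) v = Apow_act x (Apow_act y v).
Proof. by apply/ffunP => k; rewrite !ffunE nua_mulA. Qed.

Lemma Apow_actDl x y v : Apow_act (x + y) v = Apow_act x v + Apow_act y v.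
Proof. by apply/ffunP => k; rewrite !ffunE nua_mulDl. Qed.

Lemma Apow_actDr x v w : Apow_act x (v + w) = Apow_act x v + Apow_act x w.
Proof. by apply/ffunP => k; rewrite !ffunE nua_mulDr. Qed.

Lemma Apow_actZl c x v : Apow_act (c *: x) v = c *: Apow_act x v.
Proof. by apply/ffunP => k; rewrite !ffunE nua_mulZl. Qed.

Lemma Apow_actZr c x v : Apow_act x (c *: v) = c *: Apow_act x v.
Proof. by apply/ffunP => k; rewrite !ffunE nua_mulZr. Qed.

Definition Apow_lmod : lmod A :=
  LMod Apow_actA Apow_actDl Apow_actDr Apow_actZl Apow_actZr.

Lemma Apow_combination_hom (M : lmod A) (g : 'I_n -> M) :
  is_hom (fun v : Apow_lmod => \sum_(k < n) v k ▷ g k).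
Proof.
split=> [c v w|x v] /=.
  rewrite scaler_sumr -big_split /=; apply: eq_bigr => k _.
  by rewrite !ffunE lm_act_linearl.
rewrite (is_linear_sum _ _ _ (lm_act_linearr x)).
by apply: eq_bigr => k _; rewrite ffunE lm_actA.
Qed.

End PowerModule.

Section RightCoordinates.
Variables (K : fieldType) (A : nuAlg K) (M : lmod A).
Hypotheses (A_units : has_local_units A) (M_gen : proj_generator M).

Lemma right_coord_exists : exists n (e : A) (be : 'I_n -> A -> M) bec,
  right_coord e be bec.
Proof.
case: M_gen => [[M_qc [n [g g_span]]] M_proj _].
have [y yg] := choice _ (fun i => M_qc (g i)).
have [p [p_idem p_unit]] := A_units [seq y i | i <- enum 'I_n].
have pg i : p ▷ g i = g i.
  have [py _] := p_unit (y i) (map_f y (mem_enum _ i)).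
  by rewrite -{1}yg -lm_actA py yg.
pose G (v : Apow_lmod A n) := \sum_(k < n) v k ▷ g k.
have G_onto m : exists v, G v = m.
  have [c [x ->]] := g_span m; exists [ffun i => c i *: y i + x i].
  by apply: eq_bigr => i _; rewrite ffunE lm_act_linearl yg.
have [h [[lin_h act_h] Gh]] :=
  M_proj _ _ _ _ (Apow_combination_hom g) G_onto (hom_id M).
exists n, p, (fun k a => a ▷ g k), (fun k m => h m k ⋅ p); split=> //.
- by move=> k; split=> [c a b _ _|x a _]; rewrite ?lm_act_linearl ?lm_actA.
- move=> k; split=> [m|c m m'|x m]; first by exists (h m k).
    by rewrite lin_h !ffunE nua_mul_linearl.
  by rewrite act_h ffunE nua_mulA.
- by move=> m; rewrite -[RHS]Gh; apply: eq_bigr => k _; rewrite lm_actA pg.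
Qed.

End RightCoordinates.

Section LeftCoordinates.
Variables (K : fieldType) (A : nuAlg K) (M : lmod A) (J : Type) (ee : J -> A).
Hypotheses (ee_idem : forall j, ee j ⋅ ee j = ee j)
           (ee_orth : forall i j, i <> j -> ee i ⋅ ee j = 0)
           (ee_span : forall a : A, exists s : seq (J * J * A),
              a = \sum_(t <- s) ee t.1.1 ⋅ t.2 ⋅ ee t.1.2)
           (M_gen : proj_generator M).

Local Notation supp := (ee_supp ee_span).

Let ee_decomp j := generator_decomp (ee_local_units ee_idem ee_orth ee_span) M_gen
                                    (ee_idem j).
Let D (j : {classic J}) : Mdecomp M := projT1 (cid (ee_decomp j)).
Let D_spec (j : {classic J}) : decomposes (ee j) (D j) := projT2 (cid (ee_decomp j)).

Definition lc_index := {j : {classic J} & 'I_(md_size (D j))}.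
Definition lc_pair j (l : 'I_(md_size (D j))) : lc_index := Tagged _ l.
Definition lc_U (i : lc_index) : M -> A := md_U (D (tag i)) (tagged i).
Definition lc_Z (i : lc_index) : M := md_Z (D (tag i)) (tagged i).

Lemma lc_U_hom i : is_Ahom (lc_U i).
Proof. by have [U_hom _ _] := D_spec (tag i); apply: U_hom. Qed.

Lemma lc_U_ee i m : lc_U i m ⋅ ee (tag i) = lc_U i m.
Proof. by have [_ U_ee _] := D_spec (tag i); apply: U_ee. Qed.

Definition lc_al (i : lc_index) (y : Bend M) : M := sval y (ee (tag i) ▷ lc_Z i).
Definition lc_alc (i : lc_index) (z : M) : Bend M := dyad (lc_U_hom i) z.

Definition lc_indices (L : seq {classic J}) : seq lc_index :=
  [seq lc_pair l | j <- L, l <- index_enum 'I_(md_size (D j))].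

Lemma lc_indices_uniq L : uniq L -> uniq (lc_indices L).
Proof.
move=> uL; apply: allpairs_uniq_dep => // [j _|[j l] [j' l'] _ _ //].
exact: index_enum_uniq.
Qed.

Lemma lc_indices_tag L i : tag i \in L -> i \in lc_indices L.
Proof. by case: i => j l jL; apply: (allpairs_f_dep _ jL (mem_index_enum l)). Qed.

Lemma lc_alc_vanish i w z : tag i \notin supp w -> lc_alc i (w ▷ z) = zeroB M.
Proof.
move=> /(ee_mul_supp ee_orth) [ee_w _]; apply: Bend_ext => p /=.
by rewrite -lc_U_ee -lm_actA -nua_mulA ee_w nua_mul0r lm_act0l.
Qed.

Lemma lc_al_vanish i x y : tag i \notin supp x -> x ▷ lc_al i y = 0.
Proof.
move=> /(ee_mul_supp ee_orth) [_ x_ee].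
by rewrite /lc_al -Bend_act -lm_actA x_ee lm_act0l (is_linear0 (Bend_linear y)).
Qed.

Lemma lc_expand_tag j z :
  \sum_(l <- index_enum 'I_(md_size (D j)))
    lc_al (lc_pair l) (lc_alc (lc_pair l) z) = ee j ▷ z.
Proof.
have [U_hom _ UZ] := D_spec j.
transitivity ((ee j ⋅ \sum_(l < md_size (D j)) md_U (D j) l (md_Z (D j) l)) ▷ z).
  rewrite (is_linear_sum _ _ _ (nua_mul_linearr _)).
  rewrite (is_linear_sum _ _ _ (lm_act_linearl _)).
  by apply: eq_bigr => l _; rewrite /= /lc_U /lc_Z /= (U_hom l).2.
by rewrite UZ ee_idem.
Qed.

Lemma left_coord_exists : exists (I : eqType) (al : I -> Bend M -> M) alc,
  left_coord al alc.
Proof.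
case: M_gen => [[M_qc _] _ _].
exists (lc_index : eqType), lc_al, lc_alc; split=> [i|i|z|x].
- by split.
- split=> [c m m'|m y]; apply: Bend_ext => p /=; first by rewrite lm_act_linearr.
  by rewrite Bend_act.
- have [w wz] := M_qc z; set L := undup (supp w).
  have alc_z i : i \notin lc_indices L -> lc_alc i z = zeroB M.
    move=> iL; rewrite -wz lc_alc_vanish // -mem_undup.
    by apply: contra iL; apply: lc_indices_tag.
  split; first by exists (lc_indices L).
  rewrite (@fsumE _ _ _ (lc_indices L)) => [|i /alc_z ->] //.
  rewrite undup_id ?lc_indices_uniq ?undup_uniq // big_allpairs_dep /=.
  under eq_bigr => j _ do rewrite lc_expand_tag.
  rewrite -(is_linear_sum _ _ _ (lm_act_linearl _)) -{1}wz -lm_actA.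
  have wL : {subset supp w <= L} by move=> j; rewrite mem_undup.
  by rewrite (ee_sum_unit ee_idem ee_orth (undup_uniq _) wL).1.
- exists (lc_indices (supp x)) => i ix.
  have jx : tag i \notin supp x by apply: contra ix; apply: lc_indices_tag.
  by split=> [y|m]; [apply: lc_al_vanish | apply: lc_alc_vanish].
Qed.

End LeftCoordinates.

Theorem theorem9p4 (R : realType) (A : nuAlg R[i]) (M : lmod A) :
  strongly_AUF A -> proj_generator M ->
  [/\ (exists (I : eqType) (al : I -> Bend M -> M) (alc : I -> M -> Bend M),
          left_coord al alc),
      (exists (n : nat) (e : A) (be : 'I_n -> A -> M) (bec : 'I_n -> M -> A),
          right_coord e be bec) &
      forall (I : eqType) (al : I -> Bend M -> M) (alc : I -> M -> Bend M)
             (n : nat) (e : A) (be : 'I_n -> A -> M) (bec : 'I_n -> M -> A),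
        left_coord al alc -> right_coord e be bec ->
        [/\ (forall psi, SLF_A psi -> SLF_B (RTr e be bec psi)),
            (forall phi, SLF_B phi -> SLF_A (LTr al alc phi)),
            (forall (c : R[i]) psi1 psi2, SLF_A psi1 -> SLF_A psi2 ->
               forall y, RTr e be bec (fun x => c * psi1 x + psi2 x) y
                         = c * RTr e be bec psi1 y + RTr e be bec psi2 y),
            (forall psi, SLF_A psi ->
               forall x, LTr al alc (RTr e be bec psi) x = psi x) &
            (forall phi, SLF_B phi ->
               forall y, RTr e be bec (LTr al alc phi) y = phi y)]].
Proof.
(* The generating idempotent only serves to guarantee that such an [M] exists. *)
move=> [[J [ee [ee_idem ee_orth _ ee_span]]] _] M_gen.
have A_units := ee_local_units ee_idem ee_orth ee_span.
split.
- exact: left_coord_exists ee_idem ee_orth ee_span M_gen.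
- exact: right_coord_exists A_units M_gen.
- move=> I al alc n e be bec left_al right_be; split.
  + by move=> psi; apply: RTr_SLF.
  + by move=> phi; apply: LTr_SLF.
  + by move=> c psi1 psi2 _ _ y; apply: RTr_linear.
  + move=> psi psi_slf x.
    have [p [p_idem /(_ x (mem_head _ _)) [_ xp]]] := A_units [:: x].
    have [d [U_hom _ UZ]] := generator_decomp A_units M_gen p_idem.
    by apply: (LTr_RTr left_al right_be psi_slf (Z := md_Z d) U_hom); rewrite UZ.
  + by move=> phi phi_slf y; apply: RTr_LTr.
Qed.
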